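(* For each prime $p$, there are at most two extreme symmetric triples whose smallest element is $p$, and at most one extreme symmetric sequence of length $4$ whose smallest element is $p$. There is no extreme symmetric sequence of length greater than $4$.
   Context: Two distinct primes $p$ and $q$ form a symmetric pair if $\gcd(p-1, q-1) = |p-q|$. A symmetric sequence is a finite set of primes in which any two distinct primes form a symmetric pair; its length is the number of primes in it, and a symmetric triple is a symmetric sequence of length $3$. A symmetric sequence is called extreme if, writing $p$ for its smallest prime, its largest prime is $2p-1$. *)

From mathcomp Require Import all_boot.
Set Implicit Arguments. Unset Strict Implicit. Unset Printing Implicit Defensive.

(* Finite sets of primes are represented canonically as strictly increasing
   lists of naturals (sorted ltn s), so that equality of lists is equality
   of sets. *)

Definition distn (p q : nat) : nat := (p - q) + (q - p).

Definition symmetric_pair (p q : nat) : bool :=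
  [&& prime p, prime q, p != q & gcdn p.-1 q.-1 == distn p q].

Definition symmetric_seq (s : seq nat) : Prop :=
  sorted ltn s /\ all prime s /\
  (forall p q, p \in s -> q \in s -> p != q -> symmetric_pair p q).

Definition min_elem (s : seq nat) (p : nat) : Prop :=
  p \in s /\ forall q, q \in s -> p <= q.

Definition extreme (s : seq nat) : Prop :=
  exists p, min_elem s p /\ (2 * p - 1) \in s /\ forall q, q \in s -> q <= 2 * p - 1.

From mathcomp Require Import all_boot zify.
Set Implicit Arguments. Unset Strict Implicit. Unset Printing Implicit Defensive.

(* Let p < q < 2p - 1 be the smallest, a middle and the largest prime of an
   extreme symmetric sequence, and a := q - p.  The pair (p, q) gives
   a | p - 1, say p - 1 = k a; then 2p - 1 - q = (k - 1) a and q - 1 = (k + 1) a,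
   so the pair (q, 2p - 1) forces k - 1 | k + 1, i.e. k = 2 or k = 3.  Hence
   every middle element is (3p - 1)/2 or (4p - 1)/3, and sortedness pins down
   the sequences of length 3 and 4. *)

Lemma symmetric_pair_dvd_pred (p q : nat) :
  p < q -> symmetric_pair p q -> (q - p) %| p.-1.
Proof.
move=> lt_pq /and4P [_ _ _ /eqP gcd_pq].
have -> : q - p = distn p q by rewrite /distn; lia.
by rewrite -gcd_pq dvdn_gcdl.
Qed.

Lemma pred_dvdn_succ (k : nat) : 1 < k -> k.-1 %| k.+1 -> k = 2 \/ k = 3.
Proof.
move=> k_gt1 dvd_k.
have dvd2 : k.-1 %| 2.
  have k_succ : k.+1 = k.-1 + 2 by lia.
  by rewrite k_succ dvdn_addr in dvd_k.
have := dvdn_leq (isT : 0 < 2) dvd2; lia.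
Qed.

Lemma extreme_middle (p q : nat) : p < q -> q < 2 * p - 1 ->
  (q - p) %| p.-1 -> (2 * p - 1 - q) %| q.-1 -> 2 * q = 3 * p - 1 \/ 3 * q = 4 * p - 1.
Proof.
move=> lt_pq lt_qr dvd_p dvd_q.
have a_gt0 : 0 < q - p by lia.
case/dvdnP: dvd_p => k def_p.
have def_r : 2 * p - 1 - q = k.-1 * (q - p) by nia.
have def_q : q.-1 = k.+1 * (q - p) by nia.
have k_gt1 : 1 < k by nia.
have : k.-1 %| k.+1 by rewrite -(dvdn_pmul2r a_gt0) -def_r -def_q.
by case/(pred_dvdn_succ k_gt1) => k_eq; rewrite k_eq in def_p; lia.
Qed.

Definition extreme_candidates (p : nat) : seq nat :=
  [:: p; (3 * p - 1)./2; (4 * p - 1) %/ 3; 2 * p - 1].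

Lemma extreme_max_elem (s : seq nat) (p : nat) : extreme s -> min_elem s p ->
  2 * p - 1 \in s /\ forall q, q \in s -> q <= 2 * p - 1.
Proof.
move=> [p' [[p's min_p'] max_p']] [ps min_p].
suff -> : p = p' by [].
by apply/eqP; rewrite eqn_leq min_p // min_p'.
Qed.

Lemma extreme_subset_candidates (s : seq nat) (p : nat) :
  symmetric_seq s -> extreme s -> min_elem s p -> {subset s <= extreme_candidates p}.
Proof.
move=> [_ [_ sym_s]] ext_s min_s q qs.
have [ps min_p] := min_s; have [rs max_r] := extreme_max_elem ext_s min_s.
have [<-|qp] := eqVneq p q; first by rewrite inE eqxx.
have [->|qr] := eqVneq q (2 * p - 1); first by rewrite !inE eqxx !orbT.
have lt_pq : p < q by rewrite ltn_neqAle qp min_p.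
have lt_qr : q < 2 * p - 1 by rewrite ltn_neqAle qr max_r.
have dvd_p := symmetric_pair_dvd_pred lt_pq (sym_s p q ps qs qp).
have dvd_q := symmetric_pair_dvd_pred lt_qr (sym_s q _ qs rs qr).
rewrite !inE; case: (extreme_middle lt_pq lt_qr dvd_p dvd_q) => <-.
  by rewrite mul2n doubleK eqxx orbT.
by rewrite mulKn // eqxx !orbT.
Qed.

Lemma extreme_triple_shape (s : seq nat) (p : nat) :
  symmetric_seq s -> extreme s -> size s = 3 -> min_elem s p ->
  s = [:: p; (3 * p - 1)./2; 2 * p - 1] \/ s = [:: p; (4 * p - 1) %/ 3; 2 * p - 1].
Proof.
move=> sym_s ext_s size_s min_s.
have sub_s := extreme_subset_candidates sym_s ext_s min_s.
have [ps min_p] := min_s; have [rs max_r] := extreme_max_elem ext_s min_s.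
have [sorted_s _] := sym_s.
case: s {sym_s ext_s min_s} size_s sorted_s ps rs min_p max_r sub_s => [|a [|x [|b []]]] // _.
rewrite /= !inE => /and3P [lt_ax lt_xb _] ps rs min_p max_r sub_s.
have := min_p a; have := max_r b; rewrite !inE !eqxx !orbT => le_b le_a.
have [-> ->] : a = p /\ b = 2 * p - 1 by lia.
move: (sub_s x); rewrite !inE eqxx orbT => /(_ isT).
by case/or4P => /eqP x_eq; [lia | left | right | lia]; rewrite ?x_eq.
Qed.

Lemma extreme_quadruple_shape (s : seq nat) (p : nat) :
  symmetric_seq s -> extreme s -> size s = 4 -> min_elem s p ->
  s = [:: p; (4 * p - 1) %/ 3; (3 * p - 1)./2; 2 * p - 1].
Proof.
move=> sym_s ext_s size_s min_s.
have sub_s := extreme_subset_candidates sym_s ext_s min_s.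
have [ps min_p] := min_s; have [rs max_r] := extreme_max_elem ext_s min_s.
have [sorted_s _] := sym_s.
case: s {sym_s ext_s min_s} size_s sorted_s ps rs min_p max_r sub_s
  => [|a [|x [|y [|b []]]]] // _.
rewrite /= !inE => /and4P [lt_ax lt_xy lt_yb _] ps rs min_p max_r sub_s.
have := min_p a; have := max_r b; rewrite !inE !eqxx !orbT => le_b le_a.
have [-> ->] : a = p /\ b = 2 * p - 1 by lia.
move: (sub_s x) (sub_s y); rewrite !inE !eqxx !orbT => /(_ isT) x_cand /(_ isT).
by case/or4P: x_cand => /eqP x_eq; case/or4P => /eqP y_eq;
  first [lia | rewrite x_eq y_eq].
Qed.

Lemma extreme_size_le4 (s : seq nat) : symmetric_seq s -> extreme s -> size s <= 4.
Proof.
move=> sym_s ext_s; have [p [min_s _]] := ext_s.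
have [sorted_s _] := sym_s.
rewrite -[4]/(size (extreme_candidates p)).
apply: (uniq_leq_size (sorted_uniq ltn_trans ltnn sorted_s)).
exact: extreme_subset_candidates.
Qed.

Theorem corollary2 :
  (forall p : nat, prime p ->
     forall s1 s2 s3 : seq nat,
       (forall s, s \in [:: s1; s2; s3] ->
          [/\ symmetric_seq s, extreme s, size s = 3 & min_elem s p]) ->
       s1 = s2 \/ s1 = s3 \/ s2 = s3) /\
  (forall p : nat, prime p ->
     forall s1 s2 : seq nat,
       symmetric_seq s1 -> extreme s1 -> size s1 = 4 -> min_elem s1 p ->
       symmetric_seq s2 -> extreme s2 -> size s2 = 4 -> min_elem s2 p ->
       s1 = s2) /\
  (forall s : seq nat, symmetric_seq s -> extreme s -> size s <= 4).
Proof.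
split; last split; last exact: extreme_size_le4.
- move=> p _ s1 s2 s3 triples.
  have shape s : s \in [:: s1; s2; s3] ->
      s = [:: p; (3 * p - 1)./2; 2 * p - 1] \/ s = [:: p; (4 * p - 1) %/ 3; 2 * p - 1].
    by move=> /triples [sym_s ext_s size_s min_s]; exact: extreme_triple_shape.
  have [s1_in s2_in s3_in] : [/\ s1 \in [:: s1; s2; s3], s2 \in [:: s1; s2; s3]
                                & s3 \in [:: s1; s2; s3]] by rewrite !inE !eqxx !orbT.
  case: (shape s1 s1_in) (shape s2 s2_in) (shape s3 s3_in) => -> [] -> [] ->;
    first [by left | by right; left | by right; right].
- move=> p _ s1 s2 sym1 ext1 size1 min1 sym2 ext2 size2 min2.
  by rewrite (extreme_quadruple_shape sym1 ext1 size1 min1)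
             (extreme_quadruple_shape sym2 ext2 size2 min2).
Qed.
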